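(* Consider a canonical game (with $m\ge1$). (i) If the action groups satisfy $S_n\le A< B\le U(n)$, then neither player has a strong winning strategy. (ii) If the action groups satisfy $S_n\le B< A\le U(n)$, then neither player has a strong winning strategy.
   Context: Setting: a quantum system in $\mathbb{C}^n$ with computational basis $\ket{0},\dots,\ket{n-1}$, initial basis state $\ket{q_0}$, and target basis states $\ket{q_A}$ (player 1) and $\ket{q_B}$ (player 2) with $\ket{q_A}\neq\ket{q_B}$. Player 1's moves come from a subgroup $A\le U(n)$ and player 2's from a subgroup $B\le U(n)$; $A<B$ means $A$ is a proper subgroup of $B$. $S_n$ denotes the symmetric group, identified with the subgroup of $U(n)$ of $n\times n$ permutation matrices. Canonical game: $2m$ rounds; a strategy of player 1 is $\sigma_1=(A_1,\dots,A_m)$, $A_i\in A$, a strategy of player 2 is $\sigma_2=(B_1,\dots,B_m)$, $B_i\in B$, and the final state $B_mA_m\cdots B_1A_1\ket{q_0}$ is measured in the computational basis; player 1 wins on outcome $\ket{q_A}$, player 2 on outcome $\ket{q_B}$. A strategy of a player is a strong winning strategy if for every strategy of the opponent that player wins with probability $1$. *)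

From HB Require Import structures.
From mathcomp Require Import all_boot all_order all_algebra all_fingroup.
From mathcomp Require Import sesquilinear spectral.
From mathcomp Require Import complex.
From mathcomp Require Import reals.
Set Implicit Arguments. Unset Strict Implicit. Unset Printing Implicit Defensive.
Import Order.TTheory GRing.Theory Num.Theory.
Local Open Scope ring_scope.

Definition subgroup_U (C : numClosedFieldType) (n : nat) (G : {pred 'M[C]_n}) : Prop :=
  [/\ forall M, M \in G -> M \is unitarymx,
      1%:M \in G,
      forall M N, M \in G -> N \in G -> M *m N \in G
    & forall M, M \in G -> invmx M \in G].

Definition contains_Sn (C : numClosedFieldType) (n : nat) (G : {pred 'M[C]_n}) : Prop :=
  forall s : 'S_n, perm_mx s \in G.

Definition proper_subgrp (T : Type) (H G : {pred T}) : Prop :=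
  {subset H <= G} /\ exists x, x \in G /\ x \notin H.

Definition ket (C : numClosedFieldType) (n : nat) (q : 'I_n) : 'cV[C]_n :=
  delta_mx q ord0.

(* Final state B_m A_m ... B_1 A_1 |q0> of the canonical game with 2m rounds,
   with strategies sA = (A_1,...,A_m), sB = (B_1,...,B_m) indexed by 'I_m. *)
Definition final_state (C : numClosedFieldType) (n m : nat) (q0 : 'I_n)
  (sA sB : 'I_m -> 'M[C]_n) : 'cV[C]_n :=
  foldl (fun v i => sB i *m (sA i *m v)) (ket C q0) (enum 'I_m).

Definition prob (C : numClosedFieldType) (n : nat) (v : 'cV[C]_n) (q : 'I_n) : C :=
  `|v q ord0| ^+ 2.

Definition strong_win_1 (C : numClosedFieldType) (n m : nat) (A B : {pred 'M[C]_n})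
  (q0 qA : 'I_n) : Prop :=
  exists sA : 'I_m -> 'M[C]_n, (forall i, sA i \in A) /\
    forall sB : 'I_m -> 'M[C]_n, (forall i, sB i \in B) ->
      prob (final_state q0 sA sB) qA = 1.

Definition strong_win_2 (C : numClosedFieldType) (n m : nat) (A B : {pred 'M[C]_n})
  (q0 qB : 'I_n) : Prop :=
  exists sB : 'I_m -> 'M[C]_n, (forall i, sB i \in B) /\
    forall sA : 'I_m -> 'M[C]_n, (forall i, sA i \in A) ->
      prob (final_state q0 sA sB) qB = 1.

From HB Require Import structures.
From mathcomp Require Import all_boot all_order all_algebra all_fingroup.
From mathcomp Require Import sesquilinear spectral complex reals.
Import Order.TTheory GRing.Theory Num.Theory.
Local Open Scope ring_scope.

(* In both cases (i) and (ii) the smaller group contains S_n, so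
   BOTH players may play any permutation matrix, and in particular the identity.
   The final state is U |q0>, where U is the product of all moves (a unitary).
   - Player 2 moves last: whatever player 1 does, the state before the last move
     is v = K |q0> with K unitary.  Answering with the identity or with the
     transposition (qA qB) moves |v_qA|^2 resp. |v_qB|^2 into the qA outcome, so
     a strong win of player 1 would force two entries of modulus 1 in the unit
     column K(:, q0).
   - Player 1 moves first: playing the transposition (q0 k) turns |q0> into |k>,
     and then the final state is H |k> for a unitary H not depending on k.  A
     strong win of player 2 forces |H(qB, qA)| = |H(qB, qB)| = 1, two entries of
     modulus 1 in a unit row of H. *)

Section UnitaryEntries.
Variables (C : numClosedFieldType) (n : nat).

Lemma sum_one_two_ones (F : 'I_n -> C) (a b : 'I_n) :
  (forall j, 0 <= F j) -> \sum_j F j = 1 -> a != b -> F a = 1 -> F b = 1 -> False.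
Proof.
move=> F_ge0 sumF ab Fa Fb.
have rest_ge0 : 0 <= \sum_(j | (j != a) && (j != b)) F j.
  by apply: sumr_ge0 => j _; apply: F_ge0.
move: sumF; rewrite (bigD1 a) //= (bigD1 b) 1?eq_sym //= Fa Fb => sumF.
have rest_eq : 1 + \sum_(j | (j != a) && (j != b)) F j = 0.
  by apply: (@addrI _ 1); rewrite addr0.
by move: (ltr_pwDl ltr01 rest_ge0); rewrite rest_eq ltxx.
Qed.

Lemma unitary_row_norm (M : 'M[C]_n) i :
  M \is unitarymx -> \sum_j `|M i j| ^+ 2 = 1.
Proof.
move=> /unitarymxP /(congr1 (fun X : 'M[C]_n => X i i)).
rewrite !mxE eqxx /= => rowii; rewrite -[RHS]rowii.
by apply: eq_bigr => j _; rewrite !mxE normCK.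
Qed.

Lemma unitary_col_norm (M : 'M[C]_n) j :
  M \is unitarymx -> \sum_i `|M i j| ^+ 2 = 1.
Proof.
rewrite -trmxC_unitary => /(@unitary_row_norm _ j) <-.
by apply: eq_bigr => i _; rewrite !mxE norm_conjC.
Qed.

Lemma unitary_row_two_ones (M : 'M[C]_n) i a b :
  M \is unitarymx -> a != b ->
  `|M i a| ^+ 2 = 1 -> `|M i b| ^+ 2 = 1 -> False.
Proof.
move=> /(@unitary_row_norm _ i); apply: sum_one_two_ones => j.
exact: exprn_ge0.
Qed.

Lemma unitary_col_two_ones (M : 'M[C]_n) j a b :
  M \is unitarymx -> a != b ->
  `|M a j| ^+ 2 = 1 -> `|M b j| ^+ 2 = 1 -> False.
Proof.
move=> /(@unitary_col_norm _ j); apply: sum_one_two_ones => i.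
exact: exprn_ge0.
Qed.

Lemma unitarymx1 : (1%:M : 'M[C]_n) \is unitarymx.
Proof. by apply/unitarymxP; rewrite mul1mx trmx1 map_scalar_mx /= conjC1. Qed.

Lemma mul_ket (M : 'M[C]_n) (k i : 'I_n) : (M *m ket C k) i ord0 = M i k.
Proof. by rewrite /ket -colE mxE. Qed.

Lemma perm_mx_mulE (s : 'S_n) (v : 'cV[C]_n) i :
  (perm_mx s *m v) i ord0 = v (s i) ord0.
Proof. by rewrite -row_permE mxE. Qed.

Lemma tperm_ket (q k : 'I_n) : perm_mx (tperm q k) *m ket C q = ket C k.
Proof.
apply/matrixP => i j; rewrite (ord1 j) perm_mx_mulE !mxE eqxx !andbT.
congr (_%:R); case: tpermP => [->|->|/eqP/negbTE-> /eqP/negbTE->];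
  by rewrite ?eqxx // eq_sym.
Qed.

End UnitaryEntries.

Lemma foldl_map (T1 T2 R : Type) (f : R -> T2 -> R) (g : T1 -> T2) z s :
  foldl f z (map g s) = foldl (fun x y => f x (g y)) z s.
Proof. by elim: s z => //= x s IH z; rewrite IH. Qed.

Section Play.
Variables (C : numClosedFieldType) (n : nat).
Implicit Types (m : nat).

Definition play {m} (sA sB : 'I_m -> 'M[C]_n) : 'M[C]_n :=
  foldl (fun N i => sB i *m (sA i *m N)) 1%:M (enum 'I_m).

Lemma foldl_moves_mulmx m p (sA sB : 'I_m -> 'M[C]_n) (N : 'M[C]_(n, p)) s :
  foldl (fun N i => sB i *m (sA i *m N)) N s =
  foldl (fun N i => sB i *m (sA i *m N)) 1%:M s *m N.
Proof.
elim: s p N => [|i s IH] p N /=; first by rewrite mul1mx.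
by rewrite IH [X in _ = X *m N]IH mulmx1 !mulmxA.
Qed.

Lemma final_stateE m q0 (sA sB : 'I_m -> 'M[C]_n) :
  final_state q0 sA sB = play sA sB *m ket C q0.
Proof. by rewrite /final_state /play foldl_moves_mulmx. Qed.

Lemma eq_play m (sA sA' sB sB' : 'I_m -> 'M[C]_n) :
  sA =1 sA' -> sB =1 sB' -> play sA sB = play sA' sB'.
Proof.
move=> eA eB; rewrite /play; elim: (enum _) 1%:M => //= i s IH N.
by rewrite eA eB IH.
Qed.

Lemma play_unitary m (sA sB : 'I_m -> 'M[C]_n) :
  (forall i, sA i \is unitarymx) -> (forall i, sB i \is unitarymx) ->
  play sA sB \is unitarymx.
Proof.
move=> uA uB; rewrite /play.
elim: (enum _) 1%:M (unitarymx1 C n) => //= i s IH N uN.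
by apply: IH; rewrite !mul_unitarymx.
Qed.

Lemma playSr m (sA sB : 'I_m.+1 -> 'M[C]_n) :
  play sA sB = sB ord_max *m (sA ord_max *m
    play (sA \o widen_ord (leqnSn m)) (sB \o widen_ord (leqnSn m))).
Proof. by rewrite /play enum_ordSr foldl_rcons foldl_map. Qed.

Lemma playSl m (sA sB : 'I_m.+1 -> 'M[C]_n) :
  play sA sB = play (sA \o lift ord0) (sB \o lift ord0) *m (sB ord0 *m sA ord0).
Proof.
by rewrite /play enum_ordSl /= foldl_map foldl_moves_mulmx mulmx1.
Qed.

End Play.
Arguments play {C n m}.

Section NoStrongWin.
Variables (C : numClosedFieldType) (n m : nat).
Variables (A B : {pred 'M[C]_n}) (q0 qA qB : 'I_n).
Hypotheses (qAB : qA != qB) (groupA : subgroup_U A) (groupB : subgroup_U B).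

Definition single_move (i : 'I_m.+1) (P : 'M[C]_n) (j : 'I_m.+1) : 'M[C]_n :=
  if j == i then P else 1%:M.

Lemma single_move_in {G : {pred 'M[C]_n}} {i P} :
  subgroup_U G -> P \in G -> forall j, single_move i P j \in G.
Proof. by case=> _ G1 _ _ PG j; rewrite /single_move; case: ifP. Qed.

(* Player 2 moves last: answering with the identity or with (qA qB) in the last
   round defeats any strategy of player 1. *)
Lemma no_strong_win_1 : contains_Sn B -> ~ strong_win_1 m.+1 A B q0 qA.
Proof.
case: groupA => uA _ _ _ SnB [sA [sA_A win]].
pose K := sA ord_max *m play (sA \o widen_ord (leqnSn m)) (fun _ => 1%:M).
have K_unitary : K \is unitarymx.
  apply: mul_unitarymx; first exact: uA (sA_A _).
  by apply: play_unitary => i; [exact: uA (sA_A _) | exact: unitarymx1].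
have finalE P : final_state q0 sA (single_move ord_max P) = P *m (K *m ket C q0).
  rewrite final_stateE playSr /single_move eqxx !mulmxA.
  (* every round before the last one is played as the identity by player 2 *)
  congr (_ *m _ *m _ *m _); apply: eq_play => // i /=.
  by rewrite -val_eqE /= ltn_eqF.
have prob_win (s : 'S_n) : `|K (s qA) q0| ^+ 2 = 1.
  have := win (single_move ord_max _) (single_move_in groupB (SnB s)).
  by rewrite /prob finalE perm_mx_mulE mul_ket.
apply: (@unitary_col_two_ones _ _ K q0 qA qB K_unitary qAB).
  by have := prob_win 1%g; rewrite perm1.
by have := prob_win (tperm qA qB); rewrite tpermL.
Qed.

(* Player 1 moves first: playing (q0 qA) or (q0 qB) in the first round defeats
   any strategy of player 2. *)
Lemma no_strong_win_2 : contains_Sn A -> ~ strong_win_2 m.+1 A B q0 qB.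
Proof.
case: groupB => uB _ _ _ SnA [sB [sB_B win]].
pose H := play (fun _ => 1%:M) (sB \o lift ord0) *m sB ord0.
have H_unitary : H \is unitarymx.
  apply: mul_unitarymx; last exact: uB (sB_B _).
  by apply: play_unitary => i; [exact: unitarymx1 | exact: uB (sB_B _)].
have finalE P : final_state q0 (single_move ord0 P) sB = H *m (P *m ket C q0).
  rewrite final_stateE playSl /single_move eqxx !mulmxA.
  (* every round after the first one is played as the identity by player 1 *)
  by congr (_ *m _ *m _ *m _); apply: eq_play => // i /=; rewrite -val_eqE.
have prob_win k : `|H qB k| ^+ 2 = 1.
  have := win (single_move ord0 _) (single_move_in groupA (SnA (tperm q0 k))).
  by rewrite /prob finalE tperm_ket mul_ket.
exact: (@unitary_row_two_ones _ _ H qB qA qB H_unitary qAB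
  (prob_win qA) (prob_win qB)).
Qed.

End NoStrongWin.
Arguments no_strong_win_1 {C n m A B q0 qA qB}.
Arguments no_strong_win_2 {C n m A B q0 qA qB}.

Theorem theorem3 (R : realType) (n m : nat) (q0 qA qB : 'I_n)
  (A B : {pred 'M[R[i]]_n}) :
  (1 <= m)%N -> qA != qB ->
  subgroup_U A -> subgroup_U B ->
  (contains_Sn A /\ proper_subgrp A B ->
     ~ strong_win_1 m A B q0 qA /\ ~ strong_win_2 m A B q0 qB) /\
  (contains_Sn B /\ proper_subgrp B A ->
     ~ strong_win_1 m A B q0 qA /\ ~ strong_win_2 m A B q0 qB).
Proof.
case: m => // m _ qAB groupA groupB.
have win1 := no_strong_win_1 (m := m) (q0 := q0) qAB groupA groupB.
have win2 := no_strong_win_2 (m := m) (q0 := q0) qAB groupA groupB.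
have larger_Sn (G H : {pred 'M[R[i]]_n}) :
    contains_Sn G /\ proper_subgrp G H -> contains_Sn H.
  by case=> SnG [GH _] s; apply: GH.
split=> small_big; have SnH := larger_Sn _ _ small_big; case: small_big => SnG _.
- exact: conj (win1 SnH) (win2 SnG).
- exact: conj (win1 SnG) (win2 SnH).
Qed.
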